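(* Let $D$ be a strongly connected digraph with $n$ vertices and exactly three complementarity eigenvalues. If $D$ contains a subdigraph isomorphic to the $\theta$-digraph $\theta(a,b,c)$, then $n=a+b+c+2$.
   Context: All digraphs are finite, without loops and without multiple arcs. For a digraph $D$ with adjacency matrix $A$ (on $n$ vertices), a real $\lambda$ is a complementarity eigenvalue if there is a nonzero $x\in\mathbb{R}^n$, $x\ge0$, with $Ax-\lambda x\ge 0$ and $\langle x,Ax-\lambda x\rangle=0$. Subdigraphs need not be induced. The $\theta$-digraph $\theta(a,b,c)$ (integers $a,b,c\ge0$, $a\le b$, $b>0$) consists of two distinct vertices $v,w$ and three internally vertex-disjoint directed paths: two from $w$ to $v$ having $a+2$ and $b+2$ vertices, and one from $v$ to $w$ having $c+2$ vertices. *)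

From HB Require Import structures.
From mathcomp Require Import all_boot all_order all_algebra.
From mathcomp Require Import reals.
Set Implicit Arguments. Unset Strict Implicit. Unset Printing Implicit Defensive.
Import Order.TTheory GRing.Theory Num.Theory.
Local Open Scope ring_scope.

(* A digraph on vertex set 'I_n is an arc relation E : rel 'I_n
   (no multiple arcs by construction; loops excluded by [irreflexive E]). *)

Definition adjmx (R : realType) (n : nat) (E : rel 'I_n) : 'M[R]_n :=
  \matrix_(i, j) (E i j)%:R.

Definition compl_eigenvalue (R : realType) (n : nat) (A : 'M[R]_n) (lam : R) : Prop :=
  exists x : 'cV[R]_n,
    [/\ x != 0,
        forall i, 0 <= x i 0,
        forall i, 0 <= (A *m x - lam *: x) i 0
      & \sum_i x i 0 * (A *m x - lam *: x) i 0 = 0].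

Definition exactly_three_CE (R : realType) (n : nat) (A : 'M[R]_n) : Prop :=
  exists l1 l2 l3 : R,
    [/\ l1 != l2, l1 != l3, l2 != l3 &
        forall lam, compl_eigenvalue A lam <-> (lam = l1 \/ lam = l2 \/ lam = l3)].

Definition strongly_connected (n : nat) (E : rel 'I_n) : Prop :=
  forall u v, connect E u v.

(* The theta digraph theta(a,b,c) on vertex set {0, ..., a+b+c+1}:
   v = 0, w = 1; the three internally disjoint directed paths are
   w -> 2 -> ... -> a+1 -> v                    (a+2 vertices),
   w -> a+2 -> ... -> a+b+1 -> v                (b+2 vertices),
   v -> a+b+2 -> ... -> a+b+c+1 -> w            (c+2 vertices). *)
Definition theta_paths (a b c : nat) : seq (seq nat) :=
  [:: 1 :: rcons (iota 2 a) 0;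
      1 :: rcons (iota (a + 2) b) 0;
      0 :: rcons (iota (a + b + 2) c) 1].

Definition theta_arc (a b c : nat) (x y : nat) : bool :=
  has (fun p : seq nat => (x, y) \in zip p (behead p)) (theta_paths a b c).

(* D = (n, E) contains a (not necessarily induced) subdigraph isomorphic to
   theta(a,b,c): an injective vertex map sending arcs of theta to arcs of D. *)
Definition contains_theta (n : nat) (E : rel 'I_n) (a b c : nat) : Prop :=
  exists f : 'I_(a + b + c + 2) -> 'I_n,
    injective f /\
    forall x y : 'I_(a + b + c + 2), theta_arc a b c x y -> E (f x) (f y).

From HB Require Import structures.
From mathcomp Require Import all_boot all_order all_algebra.
From mathcomp Require Import reals polyrcf.
From mathcomp Require Import ring lra zify.
Set Implicit Arguments. Unset Strict Implicit. Unset Printing Implicit Defensive.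
Import Order.TTheory GRing.Theory Num.Theory.

(* Suppose n > a + b + c + 2.  Let w be the vertex of the theta subdigraph from
   which two of its paths leave, and C1, C2 the vertex sets of its two directed
   cycles through w.  Then [set w], C1, C1 :|: C2 and the whole vertex set form a
   strictly increasing chain of sets inducing strongly connected subdigraphs.
   By Perron-Frobenius each of them carries a positive eigenvector, which,
   extended by zero, witnesses a complementarity eigenvalue: its Perron root.
   Pairing the Perron vector of a set with the left Perron vector of a strictly
   larger strongly connected set, an arc entering the smaller set makes the
   Perron root increase strictly; so D has four distinct complementarity
   eigenvalues.

   Perron-Frobenius is proved over any real closed field: for positive matrices
   by induction on the size, bordering a Perron pair and locating the new root
   with the intermediate value theorem for polynomials, and for irreducible A by
   applying it to the positive matrix (1 + A)^(n-1). *)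

Local Open Scope ring_scope.

(** * Perron-Frobenius over a real closed field *)

Section FiniteSums.
Variables (R : realFieldType) (T : finType).

Lemma exists_argmin (F : T -> R) (i0 : T) : exists j, forall i, F j <= F i.
Proof. by case: (@arg_minP _ R T i0 xpredT F isT) => j _ Fj; exists j => i; apply: Fj. Qed.

Lemma sumr_gt0_term (F : T -> R) j : (forall i, 0 <= F i) -> 0 < F j -> 0 < \sum_i F i.
Proof.
by move=> F_ge0 Fj; apply: lt_le_trans Fj _; rewrite (bigD1 j) //= lerDl sumr_ge0.
Qed.

Lemma positive_sandwich (u x : T -> R) (i0 : T) :
  (forall i, 0 < u i) -> (forall i, 0 < x i) ->
  exists c C, [/\ 0 < c, forall i, c * x i <= u i & forall i, u i <= C * x i].
Proof.
move=> u_gt0 x_gt0.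
have [j minj] := exists_argmin (fun i => u i / x i) i0.
have [l maxl] := exists_argmin (fun i => - (u i / x i)) i0.
exists (u j / x j), (u l / x l); split=> [|i|i]; first by rewrite divr_gt0.
- by rewrite -ler_pdivlMr.
- by rewrite -ler_pdivrMr // -lerN2.
Qed.

End FiniteSums.

Lemma hyperbola_sign_change (R : realFieldType) (S : R -> R) (r beta K K' : R) :
  0 < K -> (forall t, r < t -> K / (t - r) <= S t <= K' / (t - r)) ->
  exists t0 t1, [/\ r < t0, t0 <= t1, t0 - beta - S t0 < 0 & 0 < t1 - beta - S t1].
Proof.
move=> K_gt0 S_bounds; set d := `|r - beta|.
have le_d : r - beta <= d := ler_norm _.
have le_d' : beta - r <= d by rewrite /d -normrN opprB ler_norm.
have K_le_K' : K <= K'.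
  have /andP[] := S_bounds (r + 1) ltac:(lra).
  by rewrite addrAC subrr add0r !divr1; apply: le_trans.
have delta_gt0 : 0 < K / (d + K + 1) by rewrite divr_gt0 //; lra.
have delta_lt1 : K / (d + K + 1) < 1 by rewrite ltr_pdivrMr; lra.
exists (r + K / (d + K + 1)), (r + 1 + d + K'); split; [lra | lra | |].
- have /andP[+ _] := S_bounds (r + K / (d + K + 1)) ltac:(lra).
  by rewrite addrAC subrr add0r invf_div mulrC divfK ?gt_eqF //; lra.
- have /andP[_ +] := S_bounds (r + 1 + d + K') ltac:(lra).
  have : K' / (r + 1 + d + K' - r) <= K' by rewrite ler_pdivrMr; nra.
  lra.
Qed.

Lemma poly_ratio_ivt (R : rcfType) (p d : {poly R}) (s : R -> R) a b : a <= b ->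
  {in `[a, b], forall t, d.[t] != 0 /\ p.[t] = d.[t] * s t} -> s a < 0 -> 0 < s b ->
  exists2 t, t \in `[a, b] & s t = 0.
Proof.
move=> le_ab pds sa_lt0 sb_gt0.
have [a_ab b_ab] : a \in `[a, b] /\ b \in `[a, b] by split; rewrite in_itv /= lexx ?le_ab.
have [[_ paE] [_ pbE]] := (pds a a_ab, pds b b_ab).
have dab_gt0 : 0 < d.[a] * d.[b].
  rewrite ltNge; apply/negP => /(polyrcf.poly_ivt le_ab) [t tab /rootP dt0].
  by case: (pds t tab); rewrite dt0 eqxx.
have [|t tab /rootP pt0] := polyrcf.poly_ivt le_ab (p := p).
  by rewrite paE pbE mulrACA [_ * (s a * s b)]mulrC ltW // pmulr_llt0 // nmulr_rlt0.
exists t => //; have [dt_neq0 ptE] := pds t tab.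
by apply/eqP; rewrite -(mulrI_eq0 _ (lregP dt_neq0)) -ptE pt0.
Qed.

Section CharPolyHorner.
Variables (R : comNzRingType) (n : nat) (A : 'M[R]_n).

Lemma char_poly_mx_horner (t : R) : map_mx (horner_eval t) (char_poly_mx A) = t%:M - A.
Proof.
by apply/matrixP => i j; rewrite !mxE horner_evalE hornerD hornerN hornerMn hornerX hornerC.
Qed.

Lemma horner_char_poly (t : R) : (char_poly A).[t] = \det (t%:M - A).
Proof. by rewrite -char_poly_mx_horner det_map_mx. Qed.

Lemma horner_adj_char_poly_mx (t : R) i j :
  (\adj (char_poly_mx A) i j).[t] = \adj (t%:M - A) i j.
Proof. by rewrite -char_poly_mx_horner -map_mx_adj [RHS]mxE. Qed.

End CharPolyHorner.

Section ShiftedInverse.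
Variables (R : rcfType) (k : nat) (B : 'M[R]_k.+1) (x : 'cV[R]_k.+1) (r : R).
Hypotheses (B_ge0 : forall i j, 0 <= B i j) (x_gt0 : forall i, 0 < x i 0)
  (Bx : B *m x = r *: x).

Lemma shifted_mulmxE t (y : 'cV[R]_k.+1) i :
  ((t%:M - B) *m y) i 0 = t * y i 0 - (B *m y) i 0.
Proof. by rewrite mulmxBl mul_scalar_mx !mxE. Qed.

Lemma ge0_of_shifted_ge0 t (y : 'cV[R]_k.+1) : r < t ->
  (forall i, 0 <= ((t%:M - B) *m y) i 0) -> forall i, 0 <= y i 0.
Proof.
move=> lt_rt Ty_ge0.
(* If [y i / x i] has a negative minimum at [j], then row [j] of [(t - B) y] is negative. *)
have [j minj] := exists_argmin (fun i => y i 0 / x i 0) ord0.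
suff yj_ge0 : 0 <= y j 0.
  move=> i; have xVi_gt0 : 0 < (x i 0)^-1 by rewrite invr_gt0.
  rewrite -(pmulr_lge0 _ xVi_gt0); apply: le_trans (minj i).
  by rewrite divr_ge0 // ltW.
rewrite leNgt; apply/negP => yj_lt0.
pose tau := - (y j 0 / x j 0); pose w := y + tau *: x.
have tau_gt0 : 0 < tau by rewrite oppr_gt0 pmulr_llt0 ?invr_gt0.
have yjE : y j 0 = - tau * x j 0 by rewrite /tau !mulNr opprK divfK ?gt_eqF.
have w_ge0 i : 0 <= w i 0 by have := minj i; rewrite !mxE ler_pdivlMr // /tau; lra.
have Bw_ge0 : 0 <= (B *m w) j 0 by rewrite mxE sumr_ge0 // => l _; rewrite mulr_ge0.
have BwE : (B *m w) j 0 = (B *m y) j 0 + tau * (r * x j 0).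
  by rewrite mulmxDr -scalemxAr Bx !mxE.
have : 0 < tau * ((t - r) * x j 0) by rewrite !mulr_gt0 ?subr_gt0.
have := Ty_ge0 j; rewrite shifted_mulmxE yjE; lra.
Qed.

Lemma shifted_unitmx t : r < t -> t%:M - B \in unitmx.
Proof.
move=> lt_rt; rewrite unitmxE unitfE -det_tr; apply/det0P => -[w w_neq0 wT0].
have Tw0 : (t%:M - B) *m w^T = 0 by apply: trmx_inj; rewrite trmx_mul trmxK wT0 trmx0.
have w_ge0 : forall i, 0 <= w^T i 0.
  by apply: (ge0_of_shifted_ge0 lt_rt) => i; rewrite Tw0 mxE.
have wN_ge0 : forall i, 0 <= (- w^T) i 0.
  by apply: (ge0_of_shifted_ge0 lt_rt) => i; rewrite mulmxN Tw0 oppr0 mxE.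
apply/(negP w_neq0)/eqP/matrixP => i j; rewrite ord1.
by have := w_ge0 j; have := wN_ge0 j; rewrite !mxE; lra.
Qed.

Lemma char_poly_neq0 t : r < t -> (char_poly B).[t] != 0.
Proof. by move=> lt_rt; rewrite horner_char_poly -unitfE -unitmxE shifted_unitmx. Qed.

Lemma resolvent_ge0 t (u : 'cV[R]_k.+1) : r < t -> (forall i, 0 <= u i 0) ->
  forall i, 0 <= (invmx (t%:M - B) *m u) i 0.
Proof.
move=> lt_rt u_ge0; apply: (ge0_of_shifted_ge0 lt_rt) => i.
by rewrite mulKVmx ?shifted_unitmx.
Qed.

Lemma resolvent_eigenvector t : r < t -> invmx (t%:M - B) *m x = (t - r)^-1 *: x.
Proof.
move=> lt_rt; have := mulKmx (shifted_unitmx lt_rt) x.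
rewrite mulmxBl mul_scalar_mx Bx -scalerBl -scalemxAr => {2}<-.
by rewrite scalerA mulVf ?scale1r // subr_eq0 gt_eqF.
Qed.

Lemma resolvent_ge t (u : 'cV[R]_k.+1) c : r < t -> (forall i, c * x i 0 <= u i 0) ->
  forall i, c / (t - r) * x i 0 <= (invmx (t%:M - B) *m u) i 0.
Proof.
move=> lt_rt cx_le_u i; have := resolvent_ge0 lt_rt (u := u - c *: x) _ i.
rewrite mulmxBr -scalemxAr resolvent_eigenvector // scalerA !mxE subr_ge0; apply.
by move=> j; rewrite !mxE subr_ge0.
Qed.

Lemma resolvent_le t (u : 'cV[R]_k.+1) C : r < t -> (forall i, u i 0 <= C * x i 0) ->
  forall i, (invmx (t%:M - B) *m u) i 0 <= C / (t - r) * x i 0.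
Proof.
move=> lt_rt u_le_Cx i; have := resolvent_ge0 lt_rt (u := C *: x - u) _ i.
rewrite mulmxBr -scalemxAr resolvent_eigenvector // scalerA !mxE subr_ge0; apply.
by move=> j; rewrite !mxE subr_ge0.
Qed.

(* By the Schur complement formula, this is the characteristic polynomial of the
   bordered matrix [[beta, v], [u, B]]. *)
Definition bordered_char_poly (u : 'cV[R]_k.+1) (v : 'I_k.+1 -> R) beta : {poly R} :=
  ('X - beta%:P) * char_poly B - \sum_i \sum_j (v i * u j 0)%:P * \adj (char_poly_mx B) i j.

Lemma horner_bordered_char_poly u v beta t : r < t ->
  (bordered_char_poly u v beta).[t] =
  (char_poly B).[t] * (t - beta - \sum_i v i * (invmx (t%:M - B) *m u) i 0).
Proof.
move=> lt_rt; have det_neq0 := char_poly_neq0 lt_rt; rewrite horner_char_poly in det_neq0 *.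
have detS : \det (t%:M - B) * \sum_i v i * (invmx (t%:M - B) *m u) i 0 =
    \sum_i \sum_j v i * u j 0 * \adj (t%:M - B) i j.
  rewrite mulr_sumr; apply: eq_bigr => i _.
  rewrite /invmx shifted_unitmx // -scalemxAl [X in _ * (_ * X)]mxE mulrCA mulVKf //.
  by rewrite mxE mulr_sumr; apply: eq_bigr => j _; ring.
rewrite mulrBr mulrDr detS hornerD hornerN hornerM hornerXsubC horner_char_poly.
rewrite horner_sum; under eq_bigr => i _ do rewrite horner_sum.
under eq_bigr => i _ do under eq_bigr => j _ do rewrite hornerCM horner_adj_char_poly_mx.
ring.
Qed.

Lemma bordered_perron (u : 'cV[R]_k.+1) (v : 'I_k.+1 -> R) beta :
  (forall i, 0 < u i 0) -> (forall i, 0 < v i) ->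
  exists rho (z : 'cV[R]_k.+1),
    [/\ forall i, 0 < z i 0, (rho%:M - B) *m z = u & \sum_i v i * z i 0 = rho - beta].
Proof.
move=> u_gt0 v_gt0.
have [c [C [c_gt0 cx_le_u u_le_Cx]]] := positive_sandwich ord0 u_gt0 x_gt0.
pose z t := invmx (t%:M - B) *m u.
pose V := \sum_i v i * x i 0.
have V_gt0 : 0 < V.
  by apply: (@sumr_gt0_term _ _ _ ord0) => [i|]; rewrite ?mulr_ge0 ?mulr_gt0 ?ltW.
have S_bounds t : r < t ->
    c * V / (t - r) <= \sum_i v i * z t i 0 <= C * V / (t - r).
  move=> lt_rt; rewrite [c * V / _]mulrAC [C * V / _]mulrAC !mulr_sumr.
  apply/andP; split; apply: ler_sum => i _; rewrite mulrCA ler_pM2l //.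
    exact: resolvent_ge.
  exact: resolvent_le.
have [t0 [t1 [lt_rt0 le_t01 s_t0 s_t1]]] :=
  hyperbola_sign_change beta (mulr_gt0 c_gt0 V_gt0) S_bounds.
have [|rho rho_in S_rho] := poly_ratio_ivt (p := bordered_char_poly u v beta)
  (d := char_poly B) (s := fun t => t - beta - \sum_i v i * z t i 0) le_t01 _ s_t0 s_t1.
  move=> t; rewrite in_itv /= => /andP[/(lt_le_trans lt_rt0) lt_rt _].
  by rewrite char_poly_neq0 // horner_bordered_char_poly.
have lt_rrho : r < rho by move: rho_in; rewrite in_itv /= => /andP[/(lt_le_trans lt_rt0)].
exists rho, (z rho); split.
- move=> i; apply: lt_le_trans (resolvent_ge lt_rrho cx_le_u i).
  by rewrite !mulr_gt0 ?invr_gt0 ?subr_gt0.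
- by rewrite mulKVmx ?shifted_unitmx.
- by move: S_rho; lra.
Qed.

End ShiftedInverse.

Section Perron.
Variable R : rcfType.

Lemma perron_positive_mx n (A : 'M[R]_n.+1) : (forall i j, 0 < A i j) ->
  exists r (x : 'cV[R]_n.+1), (forall i, 0 < x i 0) /\ A *m x = r *: x.
Proof.
elim: n A => [|n IHn] A A_gt0.
  exists (A 0 0), (const_mx 1); split=> [i|]; first by rewrite mxE.
  by apply/matrixP => i j; rewrite !ord1 !mxE big_ord1 !mxE mulr1.
pose B := \matrix_(i, j) A (lift ord0 i) (lift ord0 j).
have [r [y [y_gt0 By]]] := IHn B (fun i j => ltac:(by rewrite mxE)).
have B_ge0 i j : 0 <= B i j by rewrite mxE ltW.
have [rho [z [z_gt0 Bz vz]]] := bordered_perron B_ge0 y_gt0 By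
  (u := \col_i A (lift ord0 i) ord0) (v := fun j => A ord0 (lift ord0 j)) (A ord0 ord0)
  (fun i => ltac:(by rewrite mxE)) (fun i => A_gt0 _ _).
pose x : 'cV[R]_n.+2 := \col_i (if unlift ord0 i is Some j then z j 0 else 1).
have x0 : x ord0 0 = 1 by rewrite mxE unlift_none.
have xS j : x (lift ord0 j) 0 = z j 0 by rewrite mxE liftK.
exists rho, x; split=> [i|].
  by case: (unliftP ord0 i) => [j ->|->]; rewrite ?xS ?x0.
apply/matrixP => i l; rewrite !ord1 !mxE big_ord_recl /= x0 mulr1.
under eq_bigr => j _ do rewrite xS.
case: (unliftP ord0 i) => [i' ->|->]; rewrite ?xS ?x0.
- have := congr1 (fun M : 'cV[R]_n.+1 => M i' 0) Bz.
  rewrite shifted_mulmxE !mxE => <-.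
  by under [X in _ - X]eq_bigr => j _ do rewrite mxE; rewrite subrK.
- by rewrite vz mulr1; ring.
Qed.

Lemma perron_of_positive_power n (A : 'M[R]_n.+1) N : (forall i j, 0 <= A i j) ->
  (forall i j, 0 < ((1 + A) ^+ N) i j) ->
  exists r (x : 'cV[R]_n.+1), (forall i, 0 < x i 0) /\ A *m x = r *: x.
Proof.
move=> A_ge0; set P := (1 + A) ^+ N => P_gt0.
have [rho [x [x_gt0 Px]]] := perron_positive_mx P_gt0.
have [y yE] : {y | A *m x = y} by exists (A *m x).
have Py : P *m y = rho *: y.
  have AP : A * P = P * A by apply/commrX/commrD; [exact: commr1 | exact: commr_refl].
  by rewrite -yE mulmxA !mulmxE -AP -mulmxE -mulmxA Px -scalemxAr.
have [j maxj] := exists_argmin (fun i => - (y i 0 / x i 0)) ord0.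
pose tau := y j 0 / x j 0; pose w := tau *: x - y.
have w_ge0 i : 0 <= w i 0.
  have := maxj i; rewrite lerN2 ler_pdivrMr // => le_yi.
  by rewrite !mxE subr_ge0.
have wj : w j 0 = 0 by rewrite !mxE /tau divfK ?subrr ?gt_eqF.
have Pw : P *m w = rho *: w.
  by rewrite mulmxBr -scalemxAr Px Py scalerA mulrC -scalerA scalerBr.
have w0 l : w l 0 = 0.
  have Pwj : \sum_l P j l * w l 0 = 0.
    by have /= := congr1 (fun M : 'cV[R]_n.+1 => M j 0) Pw; rewrite mxE [RHS]mxE wj mulr0.
  have /eqP := psumr_eq0P (fun l _ => mulr_ge0 (ltW (P_gt0 j l)) (w_ge0 l)) Pwj (i := l) isT.
  by rewrite mulf_eq0 gt_eqF //= => /eqP.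
exists tau, x; split=> //; apply/matrixP => i l; rewrite ord1 yE.
by move/eqP: (w0 i); rewrite !mxE subr_eq0 => /eqP ->.
Qed.

Section PositivePower.
Variables (n : nat) (A : 'M[R]_n.+1).
Hypothesis A_ge0 : forall i j, 0 <= A i j.

Lemma expr1D_ge0 k i j : 0 <= ((1 + A) ^+ k) i j.
Proof.
elim: k i j => [|k IHk] i j; first by rewrite expr0 mxE ler0n.
by rewrite exprS -mulmxE mxE sumr_ge0 // => l _; rewrite mulr_ge0 // !mxE addr_ge0.
Qed.

Lemma expr1D_homo i j : {homo (fun k => ((1 + A) ^+ k) i j) : k l / (k <= l)%N >-> k <= l}.
Proof.
apply: homo_leq => [//|??? /le_trans|k]; first exact.
rewrite exprS mulrDl mul1r [leRHS]mxE lerDl -mulmxE mxE sumr_ge0 // => l _.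
by rewrite mulr_ge0 ?expr1D_ge0.
Qed.

Lemma expr1D_path_gt0 i p : path [rel i j | 0 < A i j] i p ->
  0 < ((1 + A) ^+ size p) i (last i p).
Proof.
elim: p i => [|l p IHp] i /=; first by rewrite expr0 mxE eqxx ltr01.
case/andP => Ail /IHp lp_gt0; rewrite exprS -mulmxE mxE.
apply: (@sumr_gt0_term _ _ _ l) => [m|]; first by rewrite mulr_ge0 ?expr1D_ge0 // !mxE addr_ge0.
by rewrite mulr_gt0 // !mxE ltr_wpDl.
Qed.

Lemma expr1D_gt0 : (forall i j, connect [rel i j | 0 < A i j] i j) ->
  forall i j, 0 < ((1 + A) ^+ n) i j.
Proof.
move=> A_conn i j; have /connectP[p /shortenP[p' path_p' uniq_p' _] ->] := A_conn i j.
apply: lt_le_trans (expr1D_path_gt0 path_p') (expr1D_homo _ _ _).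
by have := max_card (mem (i :: p')); rewrite card_ord (card_uniqP uniq_p').
Qed.

End PositivePower.

Lemma perron_irreducible n (A : 'M[R]_n) : (forall i j, 0 <= A i j) ->
  (forall i j, connect [rel i j | 0 < A i j] i j) ->
  exists r (x : 'cV[R]_n), (forall i, 0 < x i 0) /\ A *m x = r *: x.
Proof.
case: n A => [|n] A A_ge0 A_conn.
  by exists 0, 0; split=> [[]//|]; rewrite mulmx0 scaler0.
exact: perron_of_positive_power A_ge0 (expr1D_gt0 A_ge0 A_conn).
Qed.

End Perron.

(** * Strongly connected vertex sets *)

Section InducedSubdigraph.
Variable T : finType.
Implicit Types (E : rel T) (S : {set T}).

Definition induced_rel E S : rel T := [rel x y | [&& x \in S, y \in S & E x y]].

Definition strongly_connected_on E S := {in S &, forall x y, connect (induced_rel E S) x y}.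

Lemma connect_induced_sub E S S' : S \subset S' ->
  subrel (connect (induced_rel E S)) (connect (induced_rel E S')).
Proof.
move=> sSS'; apply: connect_sub => x y /and3P[xS yS Exy].
by apply: connect1; rewrite /induced_rel /= (subsetP sSS' _ xS) (subsetP sSS' _ yS).
Qed.

Lemma strongly_connected_onU E S S' z : z \in S -> z \in S' ->
  strongly_connected_on E S -> strongly_connected_on E S' ->
  strongly_connected_on E (S :|: S').
Proof.
move=> zS zS' scS scS'.
have via_z x : x \in S :|: S' ->
    connect (induced_rel E (S :|: S')) x z /\ connect (induced_rel E (S :|: S')) z x.
  have subS := connect_induced_sub (E := E) (subsetUl S S').
  have subS' := connect_induced_sub (E := E) (subsetUr S S').
  by case/setUP => [xS|xS']; split;
    [apply/subS/scS | apply/subS/scS | apply/subS'/scS' | apply/subS'/scS'].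
by move=> x y /via_z[xz _] /via_z[_ zy]; apply: connect_trans xz zy.
Qed.

Lemma strongly_connected_on_cycle E s : cycle E s -> strongly_connected_on E [set x in s].
Proof.
move=> cycE x y; rewrite !inE => xs ys; apply: connect_cycle _ xs ys.
apply: (sub_in_cycle (P := mem s)) cycE; last exact/allP.
by move=> u v us vs Euv; rewrite /induced_rel /= !inE us vs.
Qed.

Lemma strongly_connected_on_set1 E x : strongly_connected_on E [set x].
Proof. by move=> u v; rewrite !inE => /eqP-> /eqP->; apply: connect0. Qed.

Lemma strongly_connected_on_setT E : (forall x y, connect E x y) ->
  strongly_connected_on E [set: T].
Proof.
by move=> E_sc x y _ _; rewrite (eq_connect (e' := E)) // => u v; rewrite /induced_rel /= !inE.
Qed.

Lemma strongly_connected_on_rev E S :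
  strongly_connected_on E S -> strongly_connected_on [rel x y | E y x] S.
Proof.
move=> scS x y xS yS; rewrite (eq_connect (e' := [rel u v | induced_rel E S v u])).
  by rewrite connect_rev; apply: scS.
by move=> u v; rewrite /induced_rel /= andbCA.
Qed.

Lemma connect_enter (e : rel T) S x y : connect e x y -> x \notin S -> y \in S ->
  exists u v, [/\ u \notin S, v \in S & e u v].
Proof.
case/connectP=> p + ->; elim: p x => [|z p IHp] x /=; first by move=> _ /negbTE->.
case/andP=> exz pz xS; have [zS|zS] := boolP (z \in S); first by exists x, z.
exact: IHp.
Qed.

Lemma proper_neq0 S S' : S \proper S' -> S' != set0.
Proof. by case/properP=> _ [x xS' _]; apply/set0Pn; exists x. Qed.

Lemma proper_enter_arc E S S' : S != set0 -> S \proper S' -> strongly_connected_on E S' ->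
  exists u v, [/\ u \in S', u \notin S, v \in S & E u v].
Proof.
case/set0Pn=> v0 v0S /properP[sSS' [u0 u0S' u0S]] scS'.
have [u [v [uS vS /and3P[uS' _ Euv]]]] :=
  connect_enter (scS' u0 v0 u0S' (subsetP sSS' _ v0S)) u0S v0S.
by exists u, v.
Qed.

End InducedSubdigraph.

(** * Perron vectors of induced subdigraphs *)

Section PerronVectors.
Variables (R : rcfType) (n : nat).
Implicit Types (E : rel 'I_n) (S X Y : {set 'I_n}) (r s : R) (x y : 'I_n -> R) (u v : 'I_n).

Definition perron_vector E S (r : R) (x : 'I_n -> R) :=
  [/\ forall i, i \in S -> 0 < x i, forall i, i \notin S -> x i = 0
    & forall i, i \in S -> \sum_j (E i j)%:R * x j = r * x i].

Lemma perron_vector_ge0 E S r x : perron_vector E S r x -> forall i, 0 <= x i.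
Proof.
by case=> x_gt0 x_eq0 _ i; have [/x_gt0/ltW|/x_eq0->] := boolP (i \in S).
Qed.

Lemma perron_vector_of_enumeration E S k (h : 'I_k -> 'I_n) (hinv : 'I_n -> 'I_k) :
  (forall l, h l \in S) -> {in S, cancel hinv h} -> cancel h hinv ->
  strongly_connected_on E S -> exists r x, perron_vector E S r x.
Proof.
move=> h_in hK h_inj scS.
pose A := \matrix_(l, l') ((E (h l) (h l'))%:R : R).
have AE l l' : A l l' = (E (h l) (h l'))%:R by rewrite mxE.
have A_conn l m : connect [rel l m | 0 < A l m] l m.
  rewrite -[l]h_inj -[m]h_inj; have /connectP[p pth ->] := scS _ _ (h_in l) (h_in m).
  elim: p (h l) (h_in l) pth => [|i p IHp] j jS /=; first by rewrite connect0.
  case/andP=> /and3P[_ iS Eji] /(IHp i iS); apply: connect_trans; apply: connect1.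
  by rewrite /= /A mxE !hK // ltr0n lt0b.
have A_ge0 l l' : 0 <= A l l' by rewrite AE ler0n.
have [r [y [y_gt0 Ay]]] := perron_irreducible A_ge0 A_conn.
exists r, (fun i => if i \in S then y (hinv i) 0 else 0); split=> [i ->|i /negbTE->|i iS] //.
rewrite iS (_ : \sum_j _ = \sum_(j in S) (E i j)%:R * y (hinv j) 0); last first.
  by rewrite [RHS]big_mkcond; apply: eq_bigr => j _; case: (j \in S); rewrite ?mulr0.
rewrite (reindex h) /=; last by exists hinv => [l _|j /hK].
have /= := congr1 (fun M : 'cV[R]_k => M (hinv i) 0) Ay; rewrite !mxE => <-.
by apply: eq_big => [l|l _]; rewrite ?h_in // AE hK // h_inj.
Qed.

Lemma perron_vector_exists E S : S != set0 -> strongly_connected_on E S ->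
  exists r x, perron_vector E S r x.
Proof.
case/set0Pn=> i0 i0S.
apply: (perron_vector_of_enumeration (h := enum_val) (hinv := enum_rank_in i0S)).
- exact: enum_valP.
- exact: enum_rankK_in.
- exact: enum_valK_in.
Qed.

Lemma perron_vector_pairing E X Y s r x y : X \subset Y ->
  perron_vector E X s x -> perron_vector [rel i j | E j i] Y r y ->
  \sum_i y i * (\sum_j (E i j)%:R * x j - s * x i) = (r - s) * \sum_i x i * y i.
Proof.
move=> sXY [_ x_eq0 _] [_ _ Ey].
have Exy : \sum_i y i * \sum_j (E i j)%:R * x j = r * \sum_j x j * y j.
  under eq_bigr do rewrite mulr_sumr.
  rewrite exchange_big mulr_sumr; apply: eq_bigr => j _ /=.
  have [jX|/x_eq0->] := boolP (j \in X); last first.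
    by rewrite big1 ?mul0r ?mulr0 // => i _; rewrite !mulr0.
  rewrite (_ : \sum_i _ = x j * \sum_i (E i j)%:R * y i).
    by rewrite Ey ?(subsetP sXY) //; ring.
  by rewrite mulr_sumr; apply: eq_bigr => i _; ring.
under eq_bigr do rewrite mulrBr.
rewrite sumrB Exy mulrBl; congr (_ - _); rewrite mulr_sumr; apply: eq_bigr => i _; ring.
Qed.

Lemma perron_vector_residual_ge0 E X s x y i : perron_vector E X s x -> 0 <= y i ->
  0 <= y i * (\sum_j (E i j)%:R * x j - s * x i).
Proof.
move=> xP; have x_ge0 := perron_vector_ge0 xP; case: xP => _ x_eq0 Ex y_ge0.
have [iX|/x_eq0->] := boolP (i \in X); first by rewrite Ex // subrr mulr0.
by rewrite mulr0 subr0 mulr_ge0 // sumr_ge0 // => j _; rewrite mulr_ge0.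
Qed.

Lemma perron_vector_pairing_gt0 E E' X Y s r x y v : X \subset Y -> v \in X ->
  perron_vector E X s x -> perron_vector E' Y r y -> 0 < \sum_i x i * y i.
Proof.
move=> sXY vX xP yP; apply: (@sumr_gt0_term _ _ _ v) => [i|].
  by rewrite mulr_ge0 ?(perron_vector_ge0 xP) ?(perron_vector_ge0 yP).
by case: xP yP => x_gt0 _ _ [y_gt0 _ _]; rewrite mulr_gt0 ?x_gt0 ?y_gt0 ?(subsetP sXY).
Qed.

Lemma perron_root_le E X Y s r x y : X != set0 -> X \subset Y ->
  perron_vector E X s x -> perron_vector [rel i j | E j i] Y r y -> s <= r.
Proof.
case/set0Pn=> v vX sXY xP yP; have xy_gt0 := perron_vector_pairing_gt0 sXY vX xP yP.
rewrite -subr_ge0 -(pmulr_lge0 _ xy_gt0) -(perron_vector_pairing sXY xP yP).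
apply: sumr_ge0 => i _; exact: perron_vector_residual_ge0 xP (perron_vector_ge0 yP i).
Qed.

Lemma perron_root_lt E X Y s r x y u v : X \subset Y ->
  perron_vector E X s x -> perron_vector [rel i j | E j i] Y r y ->
  u \in Y -> u \notin X -> v \in X -> E u v -> s < r.
Proof.
move=> sXY xP yP uY uX vX Euv; have xy_gt0 := perron_vector_pairing_gt0 sXY vX xP yP.
rewrite -subr_gt0 -(pmulr_lgt0 _ xy_gt0) -(perron_vector_pairing sXY xP yP).
have x_ge0 := perron_vector_ge0 xP; have y_ge0 := perron_vector_ge0 yP.
apply: (@sumr_gt0_term _ _ _ u) => [i|]; first exact: perron_vector_residual_ge0 xP (y_ge0 i).
case: xP yP => x_gt0 x_eq0 _ [y_gt0 _ _]; rewrite x_eq0 // mulr0 subr0 mulr_gt0 ?y_gt0 //.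
apply: (@sumr_gt0_term _ _ _ v) => [j|]; first by rewrite mulr_ge0.
by rewrite Euv mul1r x_gt0.
Qed.

Lemma perron_root_unique E S r q x y : S != set0 ->
  perron_vector E S r x -> perron_vector [rel i j | E j i] S q y -> r = q.
Proof.
move=> S_neq0 xP yP; apply/eqP; rewrite eq_le.
by rewrite (perron_root_le S_neq0 (subxx S) xP yP) (perron_root_le S_neq0 (subxx S) yP xP).
Qed.

Lemma perron_root_proper E S S' s x : S != set0 -> S \proper S' ->
  strongly_connected_on E S' -> perron_vector E S s x ->
  exists r y, perron_vector E S' r y /\ s < r.
Proof.
move=> S_neq0 ltSS' scS' xP.
have S'_neq0 := proper_neq0 ltSS'.
have [r [y yP]] := perron_vector_exists S'_neq0 scS'.
have [q [z zP]] := perron_vector_exists S'_neq0 (strongly_connected_on_rev scS').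
have [u [v [uS' uS vS Euv]]] := proper_enter_arc S_neq0 ltSS' scS'.
exists r, y; split=> //; rewrite (perron_root_unique S'_neq0 yP zP).
exact: perron_root_lt (proper_sub ltSS') xP zP uS' uS vS Euv.
Qed.

End PerronVectors.

Section ComplementarityEigenvalues.
Variables (R : realType) (n : nat).
Implicit Types (E : rel 'I_n) (S : {set 'I_n}).

Lemma perron_vector_compl_eigenvalue E S r x : S != set0 -> perron_vector E S r x ->
  compl_eigenvalue (adjmx R E) r.
Proof.
case/set0Pn=> i0 i0S xP; have x_ge0 := perron_vector_ge0 xP; case: xP => x_gt0 x_eq0 Ex.
have residualE i : (adjmx R E *m \col_j x j - r *: \col_j x j) i 0 =
    \sum_j (E i j)%:R * x j - r * x i.
  by rewrite !mxE; congr (_ - _); apply: eq_bigr => j _; rewrite !mxE.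
exists (\col_j x j); split.
- by apply/eqP => /matrixP/(_ i0 0); rewrite !mxE; apply/eqP; rewrite gt_eqF ?x_gt0.
- by move=> i; rewrite mxE.
- move=> i; rewrite residualE; have [iS|/x_eq0->] := boolP (i \in S).
    by rewrite Ex // subrr.
  by rewrite mulr0 subr0 sumr_ge0 // => j _; rewrite mulr_ge0.
- apply: big1 => i _; rewrite residualE mxE; have [iS|/x_eq0->] := boolP (i \in S).
    by rewrite Ex // subrr mulr0.
  by rewrite mul0r.
Qed.

End ComplementarityEigenvalues.

Local Close Scope ring_scope.

(** * The theta subdigraph *)

Lemma path_of_pairs (T : eqType) (e : rel T) x p :
  (forall u v, (u, v) \in zip (x :: p) p -> e u v) -> path e x p.
Proof.
elim: p x => [//|y p IHp] x e_zip /=; rewrite e_zip ?mem_head //=.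
by apply: IHp => u v uv; apply: e_zip; rewrite inE uv orbT.
Qed.

Lemma cycle_cat_paths (T : eqType) (e : rel T) x p q :
  path e x p -> path e (last x p) (rcons q x) -> cycle e (x :: p ++ q).
Proof. by rewrite /= rcons_cat cat_path => -> ->. Qed.

Section ThetaCycles.
Variables a b c : nat.

Lemma theta_path p : p \in theta_paths a b c -> path (theta_arc a b c) (head 0 p) (behead p).
Proof.
case: p => [//|x q] pth; apply: path_of_pairs => u v uv.
by apply/hasP; exists (x :: q).
Qed.

Definition theta_cycle (q : seq nat) := 1 :: rcons q 0 ++ iota (a + b + 2) c.

Lemma cycle_theta_cycle q : 1 :: rcons q 0 \in theta_paths a b c ->
  cycle (theta_arc a b c) (theta_cycle q).
Proof.
move=> qP; apply: cycle_cat_paths; first exact: theta_path qP.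
by rewrite last_rcons; apply: (@theta_path (0 :: _)); rewrite !inE eqxx !orbT.
Qed.

Lemma theta_cycle_bounded m l : m + l <= a + b + 2 ->
  all (fun k => k < a + b + c + 2) (theta_cycle (iota m l)).
Proof. by move=> ml_le; apply/allP => k; rewrite inE mem_cat mem_rcons !inE !mem_iota; lia. Qed.

End ThetaCycles.

Section ThetaEmbedding.
Variables (n a b c : nat) (E : rel 'I_n) (f : 'I_(a + b + c + 2) -> 'I_n).
Hypotheses (f_inj : injective f)
  (f_arc : forall x y : 'I_(a + b + c + 2), theta_arc a b c x y -> E (f x) (f y)).

(* Vertices of theta are numbered as in [theta_paths]; numbers out of range are sent to 0. *)
Let o0 : 'I_(a + b + c + 2) := Ordinal (ltn_addl (a + b + c) (isT : 0 < 2)).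

Definition theta_vertex (k : nat) : 'I_n := f (insubd o0 k).

Lemma theta_vertex_inj k l : k < a + b + c + 2 -> l < a + b + c + 2 ->
  theta_vertex k = theta_vertex l -> k = l.
Proof. by move=> kN lN /f_inj/(congr1 val); rewrite !val_insubd kN lN. Qed.

Lemma theta_cycle_image s : all (fun k => k < a + b + c + 2) s ->
  cycle (theta_arc a b c) s -> cycle E (map theta_vertex s).
Proof.
rewrite cycle_map => s_bound; apply: sub_in_cycle s_bound => k l kN lN kl.
by apply: f_arc; rewrite !val_insubd (kN : k < _) (lN : l < _).
Qed.

Lemma theta_nested_strongly_connected : 0 < b ->
  exists w (S1 S2 : {set 'I_n}),
    [/\ [set w] \proper S1, S1 \proper S2, #|S2| <= a + b + c + 2,
        strongly_connected_on E S1 & strongly_connected_on E S2].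
Proof.
move=> b_gt0; pose C q := [set x in map theta_vertex (theta_cycle a b c q)].
have C_sc m l : 1 :: rcons (iota m l) 0 \in theta_paths a b c -> m + l <= a + b + 2 ->
    strongly_connected_on E (C (iota m l)).
  move=> path_ml ml_le; apply/strongly_connected_on_cycle/theta_cycle_image.
    exact: theta_cycle_bounded.
  exact: cycle_theta_cycle.
have wC q : theta_vertex 1 \in C q by rewrite inE map_f ?mem_head.
exists (theta_vertex 1), (C (iota 2 a)), (C (iota 2 a) :|: C (iota (a + 2) b)); split.
- apply/properP; split; first by rewrite sub1set.
  exists (theta_vertex 0); first by rewrite inE map_f // inE mem_cat mem_rcons mem_head orbT.
  by rewrite in_set1; apply/eqP => /theta_vertex_inj; lia.
- apply/properP; split; first exact: subsetUl.
  exists (theta_vertex (a + b + 1)).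
    by apply/setUP; right; rewrite inE map_f // inE mem_cat mem_rcons !inE mem_iota; lia.
  rewrite inE; apply/mapP => -[k k_C1 eq_k].
  have abN : a + b + 1 < a + b + c + 2 by lia.
  have C1_bounded : 2 + a <= a + b + 2 by lia.
  have kN := allP (theta_cycle_bounded c C1_bounded) k k_C1.
  move: k_C1; rewrite -(theta_vertex_inj abN kN eq_k) inE mem_cat mem_rcons !inE !mem_iota.
  lia.
- rewrite -(card_ord (a + b + c + 2)) -(card_codom f_inj); apply: subset_leq_card.
  by apply/subsetP => x; rewrite in_setU !in_set => /orP[] /mapP[k _ ->]; apply: codom_f.
- by apply: C_sc; rewrite ?inE ?eqxx //; lia.
- by apply: strongly_connected_onU (wC _) (wC _) _ _; apply: C_sc; rewrite ?inE ?eqxx ?orbT //; lia.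
Qed.

End ThetaEmbedding.

Lemma exactly_three_CE_no_four_increasing (R : realType) n (A : 'M[R]_n) r0 r1 r2 r3 :
  exactly_three_CE A -> (r0 < r1)%R -> (r1 < r2)%R -> (r2 < r3)%R ->
  compl_eigenvalue A r0 -> compl_eigenvalue A r1 -> compl_eigenvalue A r2 ->
  ~ compl_eigenvalue A r3.
Proof.
case=> [l1 [l2 [l3 [_ _ _ CE3]]]] lt01 lt12 lt23 /CE3 e0 /CE3 e1 /CE3 e2 /CE3 e3.
by case: e0 => [|[|]] e0; case: e1 => [|[|]] e1; case: e2 => [|[|]] e2;
  case: e3 => [|[|]] e3; lra.
Qed.

Theorem mainTheorem6 (R : realType) (n : nat) (E : rel 'I_n) (a b c : nat) :
  irreflexive E ->
  strongly_connected E ->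
  exactly_three_CE (adjmx R E) ->
  a <= b -> 0 < b ->
  contains_theta E a b c ->
  n = a + b + c + 2.
Proof.
move=> _ E_sc three_CE _ b_gt0 thetaE; have [f [f_inj f_arc]] := thetaE.
have := leq_card f f_inj; rewrite !card_ord leq_eqVlt => /predU1P[// | ltNn]; exfalso.
have [w [S1 [S2 [wS1 S12 S2_le scS1 scS2]]]] :=
  theta_nested_strongly_connected f_inj f_arc b_gt0.
have S2T : S2 \proper [set: 'I_n].
  by rewrite properT; apply: contraTneq S2_le => ->; rewrite cardsT card_ord -ltnNge.
have w_neq0 : [set w] != set0 by apply/set0Pn; exists w; rewrite inE.
have [r0 [x0 x0P]] := perron_vector_exists R w_neq0 (@strongly_connected_on_set1 _ E w).
have [r1 [x1 [x1P lt01]]] := perron_root_proper w_neq0 wS1 scS1 x0P.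
have [r2 [x2 [x2P lt12]]] := perron_root_proper (proper_neq0 wS1) S12 scS2 x1P.
have [r3 [x3 [x3P lt23]]] :=
  perron_root_proper (proper_neq0 S12) S2T (strongly_connected_on_setT E_sc) x2P.
apply: (exactly_three_CE_no_four_increasing three_CE lt01 lt12 lt23).
- exact: perron_vector_compl_eigenvalue w_neq0 x0P.
- exact: perron_vector_compl_eigenvalue (proper_neq0 wS1) x1P.
- exact: perron_vector_compl_eigenvalue (proper_neq0 S12) x2P.
- exact: perron_vector_compl_eigenvalue (proper_neq0 S2T) x3P.
Qed.
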